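(* Let $\mathbb D=\{z\in\mathbb C:|z|\le1\}$ and let $B:\mathbb Z\times\mathbb Z\to\mathbb D$. For $n\in\mathbb Z$ and $l\in\{0,1,2,\ldots\}$ put $$s_n^B(l)=\Big(\frac{\pi}{\sqrt3}\Big)^l\Big(1-\frac{3}{\pi^2}\sum_{k\in\mathbb Z,\,k\neq n}\frac{|B(n,k)|^l}{(k-n)^2}\Big)$$ (with $|B(n,k)|^0=1$). Assume there is $l_0\in\{1,2,\ldots\}$ such that $s_n^B(l_0)=0$ for all $n\in\mathbb Z$. Then $|B(n,k)|=1$ for all $n,k\in\mathbb Z$ with $n\neq k$, and $s_n^B(l)=0$ for all $n\in\mathbb Z$ and all $l=0,1,2,\ldots$.
   Context: The sequence $(s_n^B(l))_{l}$ is called the $n$-th noise sequence of $B$. *)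

From HB Require Import structures.
From mathcomp Require Import all_boot all_order all_algebra.
From mathcomp Require Import all_classical all_reals.
From mathcomp Require Import ereal esum trigo.
From mathcomp Require Import complex.
Set Implicit Arguments. Unset Strict Implicit. Unset Printing Implicit Defensive.
Import Order.TTheory GRing.Theory Num.Theory.
Local Open Scope classical_set_scope.
Local Open Scope ring_scope.

Definition cmod (R : realType) (z : R[i]) : R := Normc.normc z.

(* The sum over Z \ {n} is the unordered sum (esum) of nonnegative terms;
   it is finite (<= pi^2/3) since |B| <= 1, so `fine` recovers its real value. *)
Definition noise_seq (R : realType) (B : int -> int -> R[i]) (n : int) (l : nat) : R :=
  (pi / Num.sqrt 3) ^+ l *
  (1 - 3 / pi ^+ 2 *
       fine (\esum_(k in [set k : int | k != n])
               ((cmod (B n k)) ^+ l / ((k - n)%:~R) ^+ 2)%:E)).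

From mathcomp Require Import all_boot all_order all_algebra.
From mathcomp Require Import all_classical all_reals.
From mathcomp Require Import ereal esum trigo derive sequences normedtype.
From mathcomp Require Import complex.
From mathcomp Require Import ring lra zify.
Import Order.TTheory GRing.Theory Num.Theory.
Import numFieldNormedType.Exports.
Local Open Scope classical_set_scope.
Local Open Scope ring_scope.

(* Since |B| <= 1, each term |B(n,k)|^l / (k-n)^2 of the sum in s_n(l) is at most
   1/(k-n)^2, and these bounds add up to 2 zeta(2) <= pi^2/3.  So s_n(l0) = 0 forces
   every term of the sum for l0 to reach its bound, i.e. |B(n,k)| = 1 for k <> n;
   then the sum does not depend on l and s_n(l) = 0 for all l.
   The bound zeta(2) <= pi^2/6 comes from the identity
   sum_(k < N) csc^2((2k+1) pi / 4N) = 2 N^2 for N a power of 2 (double N using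
   csc^2 x = (csc^2 (x/2) + csc^2 (pi/2 - x/2)) / 4) and sin x <= x, which give
   sum_k 1/(2k+1)^2 <= pi^2/8, together with zeta(2) = 4/3 sum_k 1/(2k+1)^2. *)

Section InverseSquareSum.
Variable R : realType.

Lemma ler_sum_widen_ord (f : nat -> R) m n : (m <= n)%N -> (forall j, 0 <= f j) ->
  \sum_(j < m) f j <= \sum_(j < n) f j.
Proof. by move=> mn f0; rewrite -!(big_mkord xpredT); apply: nondecreasing_series. Qed.

Lemma sin_le_id (x : R) : 0 <= x -> sin x <= x.
Proof.
rewrite le_eqVlt => /orP[/eqP <-|x0]; first by rewrite sin0.
have sin_cont : {within `[0, x], continuous (@sin R)}.
  exact/continuous_subspaceT/continuous_sin.
have [c _] := MVT x0 (fun y _ => is_derive_sin y) sin_cont.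
rewrite sin0 !subr0 => ->.
by apply: ler_piMl; [exact: ltW | exact: cos_le1].
Qed.

Definition csc2 (x : R) := (sin x ^+ 2)^-1.

Lemma csc2_half x : 0 < x < pi -> csc2 x = (csc2 (x / 2) + csc2 (pi / 2 - x / 2)) / 4.
Proof.
move=> /andP[x0 xpi].
have s0 : 0 < sin (x / 2) by apply: sin_gt0_pi; lra.
have c0 : 0 < cos (x / 2) by apply: cos_gt0_pihalf; lra.
rewrite /csc2 sinB sin_pihalf cos_pihalf mul0r mul1r subr0.
rewrite {1}(_ : x = (x / 2) *+ 2); last by rewrite -mulr_natr; field.
rewrite sin_mulr2n exprMn_n exprMn cos2sin2.
have s2 : sin (x / 2) ^+ 2 != 0 by rewrite expf_neq0 // gt_eqF.
have c2 : 1 - sin (x / 2) ^+ 2 != 0 by rewrite -cos2sin2 expf_neq0 // gt_eqF.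
by field; rewrite c2 gt_eqF.
Qed.

Lemma csc2_pi_quarter : csc2 (pi / 4) = 2.
Proof.
have pi0 := @pi_gt0 R.
have := @csc2_half (pi / 2); rewrite [csc2 (pi / 2)]/csc2 sin_pihalf expr1n invr1.
rewrite (_ : pi / 2 - pi / 2 / 2 = pi / 4); last by field.
rewrite (_ : pi / 2 / 2 = pi / 4); last by field.
by move=> /(_ ltac:(lra)); lra.
Qed.

Definition odd_angle (N k : nat) : R := (2 * k + 1)%:R * pi / (4 * N)%:R.

Lemma odd_angle_in {N k : nat} : (k < N)%N -> 0 < odd_angle N k < pi.
Proof.
move=> kN; have pi0 := @pi_gt0 R.
rewrite /odd_angle divr_gt0 ?mulr_gt0 ?ltr0n //=; [|lia|lia].
rewrite ltr_pdivrMr ?ltr0n; last lia.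
by rewrite mulrC ltr_pM2l // ltr_nat; lia.
Qed.

Lemma sum_csc2_odd_angle_double N :
  \sum_(k < N.*2) csc2 (odd_angle N.*2 k) = 4 * \sum_(k < N) csc2 (odd_angle N k).
Proof.
rewrite -addnn big_split_ord /= [X in _ + X](reindex_inj rev_ord_inj) /=.
rewrite -big_split mulr_sumr; apply: eq_bigr => k _ /=.
have kN := ltn_ord k.
rewrite [in RHS]csc2_half ?odd_angle_in // mulrC divfK ?pnatr_eq0 //.
have mirror : (2 * (N + (N - k.+1)) + 1)%:R = (4 * N)%:R - (2 * k + 1)%:R :> R.
  by apply/eqP; rewrite eq_sym subr_eq -natrD; apply/eqP; congr (_%:R); lia.
rewrite /odd_angle mirror !natrM !natrD.
have N0 : (N%:R : R) != 0 by rewrite pnatr_eq0; lia.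
by congr (csc2 _ + csc2 _); field; rewrite N0 -natrD pnatr_eq0; lia.
Qed.

Lemma sum_csc2_odd_angle n : \sum_(k < 2 ^ n) csc2 (odd_angle (2 ^ n) k) = 2 * (2 ^ n)%:R ^+ 2.
Proof.
elim: n => [|n IH].
  by rewrite big_ord1 -csc2_pi_quarter /odd_angle mul1r expr1n mulr1.
by rewrite expnS mul2n sum_csc2_odd_angle_double IH -mul2n natrM; ring.
Qed.

Definition inv_odd_sq_sum (M : nat) : R := \sum_(j < M) ((2 * j + 1)%:R ^+ 2)^-1.

Definition inv_sq_sum (M : nat) : R := \sum_(j < M) ((j.+1)%:R ^+ 2)^-1.

Lemma inv_odd_sq_sum_pow2_le n : inv_odd_sq_sum (2 ^ n) <= pi ^+ 2 / 8.
Proof.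
set N := (2 ^ n)%N.
have N0 : 0 < (N%:R : R) by rewrite ltr0n expn_gt0.
have pi0 := @pi_gt0 R.
have /le_trans -> // : inv_odd_sq_sum N <=
    \sum_(k < N) pi ^+ 2 / (16 * N%:R ^+ 2) * csc2 (odd_angle N k).
  apply: ler_sum => k _.
  have /andP[a0 api] := odd_angle_in (ltn_ord k).
  have inv_le_csc2 : (odd_angle N k ^+ 2)^-1 <= csc2 (odd_angle N k).
    rewrite /csc2 lef_pV2 ?posrE ?exprn_gt0 ?sin_gt0_pi ?a0 //.
    by rewrite lerXn2r ?nnegrE ?sin_le_id ?ltW ?sin_gt0_pi ?a0.
  apply: le_trans (ler_wpM2l _ inv_le_csc2); last first.
    by rewrite divr_ge0 ?sqr_ge0 ?mulr_ge0 ?sqr_ge0.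
  rewrite le_eqVlt /odd_angle natrM natrD natrM; apply: predU1l.
  have k0 : (2 * k%:R + 1 : R) != 0 by apply: lt0r_neq0; have := ler0n R k; lra.
  (* [field] would unfold [pi], hence the generalization *)
  by move: pi0; move: (pi : R) => p p0; field; rewrite k0 !gt_eqF.
rewrite -mulr_sumr sum_csc2_odd_angle.
rewrite le_eqVlt; apply: predU1l.
by move: pi0; move: (pi : R) => p p0; field; rewrite gt_eqF.
Qed.

Lemma inv_odd_sq_sum_le M : inv_odd_sq_sum M <= pi ^+ 2 / 8.
Proof.
apply: le_trans (inv_odd_sq_sum_pow2_le M).
apply: (ler_sum_widen_ord (fun j => ((2 * j + 1)%:R ^+ 2)^-1)) => [|j].
  exact/ltnW/ltn_expl.
by rewrite invr_ge0 sqr_ge0.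
Qed.

Lemma inv_sq_sum_double M : inv_sq_sum M.*2 = inv_odd_sq_sum M + inv_sq_sum M / 4.
Proof.
elim: M => [|M IH]; first by rewrite /inv_sq_sum /inv_odd_sq_sum !big_ord0 mul0r addr0.
rewrite doubleS /inv_sq_sum /inv_odd_sq_sum !big_ord_recr /=.
rewrite -/(inv_sq_sum _) -/(inv_odd_sq_sum _) IH -/(inv_sq_sum _).
rewrite -[(M.*2).+2]addn2 -[(M.*2).+1]addn1 -[M.+1]addn1 -!muln2 !natrD !natrM.
have M0 := ler0n R M.
by field; apply/and3P; split; apply: lt0r_neq0; lra.
Qed.

Lemma inv_sq_sum_le M : inv_sq_sum M <= pi ^+ 2 / 6.
Proof.
have widen : inv_sq_sum M <= inv_sq_sum M.*2.
  apply: (ler_sum_widen_ord (fun j => (j.+1%:R ^+ 2)^-1)) => [|j].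
    by rewrite -addnn leq_addr.
  by rewrite invr_ge0 sqr_ge0.
have := inv_sq_sum_double M; have := inv_odd_sq_sum_le M; lra.
Qed.

End InverseSquareSum.

Local Open Scope ereal_scope.

Lemma nneseries_inv_sq_le (R : realType) :
  \sum_(i <oo | i \in [set: nat]) ((((i.+1)%:R : R) ^+ 2)^-1)%:E <= (pi ^+ 2 / 6)%:E.
Proof.
apply: lime_le.
  by apply: is_cvg_nneseries => j _ _; rewrite lee_fin invr_ge0 sqr_ge0.
apply: nearW => m; rewrite sumEFin lee_fin.
under eq_bigl do rewrite in_setT.
by rewrite big_mkord; apply: inv_sq_sum_le.
Qed.

Lemma esum_inv_sq_le (R : realType) (n : int) :
  \esum_(k in [set k : int | k != n]) ((((k - n)%:~R : R) ^+ 2)^-1)%:E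
  <= (pi ^+ 2 / 3)%:E.
Proof.
have inv_sq_ge0 (x : R) : (0 <= (x ^+ 2)^-1)%R by rewrite invr_ge0 sqr_ge0.
rewrite (esumID [set k | (n < k)%R]) //; last by move=> k _; rewrite lee_fin.
have -> : [set k | k != n] `&` [set k | (n < k)%R] =
    [set (n + j.+1%:Z)%R | j in [set: nat]].
  apply/seteqP; split => k /=; last by move=> [j _ <-]; split; lia.
  by move=> [kn nk]; exists `|k - n|%N.-1 => //; lia.
have -> : [set k | k != n] `&` ~` [set k | (n < k)%R] =
    [set (n - j.+1%:Z)%R | j in [set: nat]].
  apply/seteqP; split => k /=; last by move=> [j _ <-]; split; lia.
  by move=> [kn nk]; exists `|k - n|%N.-1 => //; lia.
rewrite !esum_set_image; first last.
- by move=> j1 j2 _ _ /=; lia.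
- by move=> j _; rewrite lee_fin.
- by move=> j1 j2 _ _ /=; lia.
- by move=> j _; rewrite lee_fin.
rewrite (eq_eseriesr (g := fun i => ((((i.+1)%:R : R) ^+ 2)^-1)%:E)); last first.
  by move=> i _; rewrite addrC addKr.
rewrite [X in _ + X](eq_eseriesr (g := fun i => ((((i.+1)%:R : R) ^+ 2)^-1)%:E)); last first.
  by move=> i _; rewrite (_ : (n - i.+1%:Z - n = - i.+1%:Z)%R) ?intrN ?sqrrN //; lia.
apply: le_trans (leeD (nneseries_inv_sq_le R) (nneseries_inv_sq_le R)) _.
by rewrite -EFinD lee_fin; have := @pi_gt0 R; lra.
Qed.

Lemma esum_ge_termwise_eq {R : realType} {T : choiceType} {A : set T} (f g : T -> R) :
  (forall x, A x -> 0 <= f x <= g x)%R ->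
  \esum_(x in A) (g x)%:E <= \esum_(x in A) (f x)%:E ->
  \esum_(x in A) (f x)%:E < +oo ->
  forall x, A x -> f x = g x.
Proof.
move=> fg gf f_fin x Ax.
have f0 y : A y -> (0 <= f y)%R by case/fg/andP.
have g0 y : A y -> (0 <= g y)%R by case/fg/andP => /le_trans; apply.
have esum_pick (h : T -> R) : (forall y, A y -> 0 <= h y)%R ->
    \esum_(y in A) (h y)%:E = (h x)%:E + \esum_(y in A `&` ~` [set x]) (h y)%:E.
  move=> h0; rewrite (esumID [set x]); last by move=> y /h0; rewrite lee_fin.
  rewrite (_ : A `&` [set x] = [set x]) ?esum_set1 ?lee_fin ?h0 //.
  by apply/seteqP; split=> y /=; [case | move=> ->].
rewrite !esum_pick // in gf f_fin.
have rest_le : \esum_(y in A `&` ~` [set x]) (f y)%:E <=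
               \esum_(y in A `&` ~` [set x]) (g y)%:E.
  by apply: le_esum => y [/fg /andP[_ fgy] _]; rewrite lee_fin.
have rest_fin : \esum_(y in A `&` ~` [set x]) (f y)%:E \is a fin_num.
  suff : (f x)%:E + \esum_(y in A `&` ~` [set x]) (f y)%:E \is a fin_num.
    by rewrite fin_numD => /andP[].
  rewrite ge0_fin_numE // adde_ge0 ?lee_fin ?f0 //.
  by apply: esum_ge0 => y [/f0]; rewrite lee_fin.
apply/eqP; rewrite eq_le; case/andP: (fg x Ax) => _ -> /=.
by rewrite -lee_fin -(leeD2rE _ _ rest_fin) (le_trans (leeD2l _ rest_le)).
Qed.

Local Close Scope ereal_scope.

Lemma cmod_ge0 {R : realType} (z : R[i]) : 0 <= cmod z.
Proof. by case: z => a b; apply: sqrtr_ge0. Qed.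

Lemma noise_seq_eq0 {R : realType} (B : int -> int -> R[i]) (n : int) (l : nat) :
  noise_seq B n l = 0 <->
  (\esum_(k in [set k : int | k != n]) ((cmod (B n k)) ^+ l / ((k - n)%:~R) ^+ 2)%:E
   = (pi ^+ 2 / 3)%:E)%E.
Proof.
rewrite /noise_seq; set S := (\esum_(k in _) _)%E.
have S0 : (0 <= S)%E.
  by apply: esum_ge0 => k _; rewrite lee_fin mulr_ge0 ?exprn_ge0 ?cmod_ge0 ?invr_ge0 ?sqr_ge0.
have pi0 := @pi_gt0 R.
have pi2 : pi ^+ 2 != 0 :> R by rewrite expf_neq0 ?gt_eqF.
have three : 3 != 0 :> R by rewrite pnatr_eq0.
split=> [|->]; last by rewrite /= mulrA divfK // divff // subrr mulr0.
move/eqP; rewrite mulf_eq0 expf_eq0 gt_eqF ?andbF ?divr_gt0 ?sqrtr_gt0 //= subr_eq0 => /eqP.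
case: S S0 => [r _ /=| _ /=|//]; last by rewrite mulr0 => /eqP; rewrite oner_eq0.
move=> r_eq; congr (_%:E); apply: (mulfI (_ : 3 / pi ^+ 2 != 0)).
  by rewrite mulf_neq0 ?invr_eq0.
by rewrite -r_eq mulrA divfK // divff.
Qed.

Theorem proposition4p1 (R : realType) (B : int -> int -> R[i])
  (HB : forall n k : int, cmod (B n k) <= 1)
  (l0 : nat) (Hl0 : (0 < l0)%N)
  (Hs : forall n : int, noise_seq B n l0 = 0) :
  (forall n k : int, n != k -> cmod (B n k) = 1) /\
  (forall (n : int) (l : nat), noise_seq B n l = 0).
Proof.
have sum_l0 n := (noise_seq_eq0 B n l0).1 (Hs n).
have modulus1 n k : n != k -> cmod (B n k) = 1.
  move=> nk; have d0 : ((k - n)%:~R : R) ^+ 2 != 0.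
    by rewrite sqrf_eq0 intr_eq0 subr_eq0 eq_sym.
  have term_le j : [set j : int | j != n] j ->
      0 <= cmod (B n j) ^+ l0 / (j - n)%:~R ^+ 2 <= ((j - n)%:~R ^+ 2)^-1.
    move=> _; rewrite mulr_ge0 ?exprn_ge0 ?cmod_ge0 ?invr_ge0 ?sqr_ge0 //=.
    by rewrite ler_piMl ?invr_ge0 ?sqr_ge0 ?exprn_ile1 ?cmod_ge0 ?HB.
  have := esum_ge_termwise_eq _ _ term_le.
  rewrite sum_l0 esum_inv_sq_le ltry => /(_ isT isT k); rewrite /= eq_sym => /(_ nk).
  rewrite -[X in _ = X]mul1r => /(mulIf (invr_neq0 d0))/eqP.
  by rewrite pexpr_eq1 ?cmod_ge0 // => /eqP.
split=> // n l; apply/noise_seq_eq0; rewrite -(sum_l0 n).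
by apply: eq_esum => k /= kn; rewrite modulus1 1?eq_sym // !expr1n.
Qed.
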